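(* Let $e_1,e_2,e_3$ be nonzero integers with $e_1+e_2+e_3=0$, let $n$ be a positive integer, and let $\Lambda=(d_1,d_2,d_3)$ be a triple of nonzero square-free integers with $d_1d_2d_3$ a square. Then $D^{(n)}_\Lambda(\mathbb{R})\neq\emptyset$ if and only if all of the following hold: $d_1>0$ if $e_2>0,e_3<0$; $d_2>0$ if $e_3>0,e_1<0$; $d_3>0$ if $e_1>0,e_2<0$.
   Context: $D^{(n)}_\Lambda$ is the curve in $\mathbb{P}^3$ with coordinates $(t,u_1,u_2,u_3)$ defined by the three equations $e_1nt^2+d_2u_2^2-d_3u_3^2=0$, $e_2nt^2+d_3u_3^2-d_1u_1^2=0$, $e_3nt^2+d_1u_1^2-d_2u_2^2=0$ (the 2-covering of $y^2=x(x-e_1n)(x+e_2n)$ attached to $\Lambda$). *)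

From Stdlib Require Import Reals ZArith.
Open Scope R_scope.

Definition squarefree (d : Z) : Prop :=
  forall m : Z, Z.divide (m * m)%Z d -> Z.abs m = 1%Z.

Definition is_square (d : Z) : Prop := exists k : Z, d = (k * k)%Z.

Definition D_eqs (e1 e2 e3 n d1 d2 d3 : Z) (t u1 u2 u3 : R) : Prop :=
  IZR e1 * IZR n * t^2 + IZR d2 * u2^2 - IZR d3 * u3^2 = 0 /\
  IZR e2 * IZR n * t^2 + IZR d3 * u3^2 - IZR d1 * u1^2 = 0 /\
  IZR e3 * IZR n * t^2 + IZR d1 * u1^2 - IZR d2 * u2^2 = 0.

(* D^{(n)}_Lambda(R) is nonempty: there is a point of P^3(R), i.e. a nonzero
   real 4-tuple (up to scaling, irrelevant since the equations are
   homogeneous), satisfying the equations. *)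
Definition D_real_nonempty (e1 e2 e3 n d1 d2 d3 : Z) : Prop :=
  exists t u1 u2 u3 : R,
    (t <> 0 \/ u1 <> 0 \/ u2 <> 0 \/ u3 <> 0) /\
    D_eqs e1 e2 e3 n d1 d2 d3 t u1 u2 u3.

From Stdlib Require Import Reals ZArith Lra Lia.
Open Scope R_scope.

(* Put T = n t^2 >= 0 and a_i = d_i u_i^2; the equations read
   e_1 T = a_3 - a_2, e_2 T = a_1 - a_3, e_3 T = a_2 - a_1.  As d_1 d_2 d_3 is a
   nonzero square, either every d_i is positive or exactly one is.  If
   e_2 > 0 > e_3 and d_1 < 0, then a_1 <= 0 while a_2 >= 0 or a_3 >= 0, and the
   equations force T = a_1 = a_2 = a_3 = 0: only the zero point remains.
   Conversely, at t = 1 the solutions are a = (s, s + e_3 n, s - e_2 n), and under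
   the stated conditions some integer s gives each a_i the sign of d_i, so that
   u_i = sqrt (a_i / d_i) is a real point. *)

Lemma sign_obstruction (E2 E3 T A B C : R) :
  0 < E2 -> E3 < 0 -> 0 <= T -> A <= 0 -> (0 <= B \/ 0 <= C) ->
  E2 * T + C - A = 0 -> E3 * T + A - B = 0 ->
  T = 0 /\ A = 0 /\ B = 0 /\ C = 0.
Proof.
  intros HE2 HE3 HT HA [HB | HC] Eq2 Eq3.
  - assert (T0 : T = 0) by nra. subst T. lra.
  - assert (T0 : T = 0) by nra. subst T. lra.
Qed.

Lemma eq0_of_scaled_square (c x : R) : c <> 0 -> c * x ^ 2 = 0 -> x = 0.
Proof.
  intros Hc H. apply Rmult_integral in H as [H | H]; [contradiction | nra].
Qed.

Lemma exists_scaled_square (c a : R) : c <> 0 -> 0 <= a * c -> exists x, c * x ^ 2 = a.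
Proof.
  intros Hc Hac. exists (sqrt (a / c)).
  assert (Hq : 0 <= a / c).
  { replace (a / c) with (a * c * / (c * c)) by (field; exact Hc).
    apply Rmult_le_pos; [exact Hac |].
    apply Rlt_le, Rinv_0_lt_compat. destruct (Rlt_dec 0 c); nra. }
  rewrite pow2_sqrt by exact Hq. field. exact Hc.
Qed.

Lemma D_real_nonempty_rotate (e1 e2 e3 n d1 d2 d3 : Z) :
  D_real_nonempty e1 e2 e3 n d1 d2 d3 -> D_real_nonempty e2 e3 e1 n d2 d3 d1.
Proof.
  intros (t & u1 & u2 & u3 & Hnz & Eq1 & Eq2 & Eq3).
  exists t, u2, u3, u1. split; [tauto |]. unfold D_eqs. lra.
Qed.

Lemma pos_of_square_neq0 (m : Z) : is_square m -> m <> 0%Z -> (0 < m)%Z.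
Proof. intros [k ->] Hk. nia. Qed.

Lemma pos_d1_of_real_point (e1 e2 e3 n d1 d2 d3 : Z) :
  (0 < n)%Z -> d1 <> 0%Z -> d2 <> 0%Z -> d3 <> 0%Z -> (0 < d1 * d2 * d3)%Z ->
  D_real_nonempty e1 e2 e3 n d1 d2 d3 -> (0 < e2)%Z -> (e3 < 0)%Z -> (0 < d1)%Z.
Proof.
  intros Hn Hd1 Hd2 Hd3 Hprod (t & u1 & u2 & u3 & Hnz & _ & Eq2 & Eq3) He2 He3.
  destruct (Z_lt_le_dec 0 d1) as [| Hd1neg]; [assumption | exfalso].
  assert (Hother : (0 < d2)%Z \/ (0 < d3)%Z) by nia.
  apply IZR_lt in Hn, He2, He3.
  assert (Hd1R : IZR d1 < 0) by (apply IZR_lt; lia).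
  destruct (sign_obstruction (IZR e2) (IZR e3) (IZR n * t ^ 2)
              (IZR d1 * u1 ^ 2) (IZR d2 * u2 ^ 2) (IZR d3 * u3 ^ 2))
    as (T0 & A0 & B0 & C0); try nra.
  { destruct Hother as [H | H]; apply IZR_lt in H; [left | right]; nra. }
  apply eq0_of_scaled_square in T0, A0, B0, C0; try lra; apply not_0_IZR; assumption.
Qed.

Lemma D_real_nonempty_of_values (e1 e2 e3 n d1 d2 d3 a1 a2 a3 : Z) :
  d1 <> 0%Z -> d2 <> 0%Z -> d3 <> 0%Z ->
  (0 <= a1 * d1)%Z -> (0 <= a2 * d2)%Z -> (0 <= a3 * d3)%Z ->
  (e1 * n = a3 - a2)%Z -> (e2 * n = a1 - a3)%Z -> (e3 * n = a2 - a1)%Z ->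
  D_real_nonempty e1 e2 e3 n d1 d2 d3.
Proof.
  intros Hd1 Hd2 Hd3 Ha1 Ha2 Ha3 Eq1 Eq2 Eq3.
  apply not_0_IZR in Hd1, Hd2, Hd3.
  apply IZR_le in Ha1, Ha2, Ha3. rewrite mult_IZR in Ha1, Ha2, Ha3.
  apply (f_equal IZR) in Eq1, Eq2, Eq3. rewrite mult_IZR, minus_IZR in Eq1, Eq2, Eq3.
  destruct (exists_scaled_square _ _ Hd1 Ha1) as [u1 Hu1].
  destruct (exists_scaled_square _ _ Hd2 Ha2) as [u2 Hu2].
  destruct (exists_scaled_square _ _ Hd3 Ha3) as [u3 Hu3].
  exists 1, u1, u2, u3. split; [left; lra |].
  unfold D_eqs. rewrite Hu1, Hu2, Hu3. lra.
Qed.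

Lemma D_real_nonempty_of_offset (e1 e2 e3 n d1 d2 d3 s : Z) :
  (e1 + e2 + e3)%Z = 0%Z -> d1 <> 0%Z -> d2 <> 0%Z -> d3 <> 0%Z ->
  (0 <= s * d1)%Z -> (0 <= (s + e3 * n) * d2)%Z -> (0 <= (s - e2 * n) * d3)%Z ->
  D_real_nonempty e1 e2 e3 n d1 d2 d3.
Proof.
  intros Hsum Hd1 Hd2 Hd3 Hs1 Hs2 Hs3.
  apply (D_real_nonempty_of_values _ _ _ _ _ _ _ s (s + e3 * n) (s - e2 * n));
    auto; nia.
Qed.

Lemma sign_patterns_of_pos_product (d1 d2 d3 : Z) :
  d1 <> 0%Z -> d2 <> 0%Z -> d3 <> 0%Z -> (0 < d1 * d2 * d3)%Z ->
  ((0 < d1 /\ 0 < d2 /\ 0 < d3) \/ (0 < d1 /\ d2 < 0 /\ d3 < 0) \/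
   (d1 < 0 /\ 0 < d2 /\ d3 < 0) \/ (d1 < 0 /\ d2 < 0 /\ 0 < d3))%Z.
Proof.
  intros Hd1 Hd2 Hd3 Hprod.
  destruct (Z_lt_le_dec 0 d1), (Z_lt_le_dec 0 d2), (Z_lt_le_dec 0 d3); nia.
Qed.

Theorem lemma2p4 (e1 e2 e3 n d1 d2 d3 : Z) :
  e1 <> 0%Z -> e2 <> 0%Z -> e3 <> 0%Z -> (e1 + e2 + e3)%Z = 0%Z ->
  (0 < n)%Z ->
  d1 <> 0%Z -> d2 <> 0%Z -> d3 <> 0%Z ->
  squarefree d1 -> squarefree d2 -> squarefree d3 ->
  is_square (d1 * d2 * d3)%Z ->
  (D_real_nonempty e1 e2 e3 n d1 d2 d3 <->
   (((0 < e2)%Z /\ (e3 < 0)%Z -> (0 < d1)%Z) /\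
    ((0 < e3)%Z /\ (e1 < 0)%Z -> (0 < d2)%Z) /\
    ((0 < e1)%Z /\ (e2 < 0)%Z -> (0 < d3)%Z))).
Proof.
  intros He1 He2 He3 Hsum Hn Hd1 Hd2 Hd3 _ _ _ Hsq.
  assert (Hprod : (0 < d1 * d2 * d3)%Z).
  { apply pos_of_square_neq0; [exact Hsq | lia]. }
  split.
  - intros HD. pose proof (D_real_nonempty_rotate _ _ _ _ _ _ _ HD) as HD'.
    pose proof (D_real_nonempty_rotate _ _ _ _ _ _ _ HD') as HD''.
    repeat split; intros [Hpos Hneg].
    + apply (pos_d1_of_real_point e1 e2 e3 n d1 d2 d3); auto.
    + apply (pos_d1_of_real_point e2 e3 e1 n d2 d3 d1); auto; lia.
    + apply (pos_d1_of_real_point e3 e1 e2 n d3 d1 d2); auto; lia.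
  - intros Hcond.
    destruct (sign_patterns_of_pos_product d1 d2 d3 Hd1 Hd2 Hd3 Hprod)
      as [Hs | [Hs | [Hs | Hs]]].
    + apply (D_real_nonempty_of_offset _ _ _ _ _ _ _ (n * (Z.abs e2 + Z.abs e3)));
        auto; nia.
    + apply (D_real_nonempty_of_offset _ _ _ _ _ _ _ 0); auto; nia.
    + apply (D_real_nonempty_of_offset _ _ _ _ _ _ _ (- (e3 * n))); auto; nia.
    + apply (D_real_nonempty_of_offset _ _ _ _ _ _ _ (e2 * n)); auto; nia.
Qed.
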